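(* Let $e$ be a $\mathtt{test}$-free expression (no subexpression of the form $\mathtt{test}\ p\ \mathtt{then}\ e'\ \mathtt{else}\ e''$) such that $\varnothing;\,n\vdash e:\mathtt{bool},\ \Pi$ is derivable in the static analysis. Then for all $P\subseteq\mathsf{Privileges}$ with $\Pi\subseteq P$, $[\![\varnothing\vdash e:\mathtt{bool}]\!]\,n\,P\,\{\}=[\![\varnothing\vdash e^-:\mathtt{bool}]\!]\,n\,P\,\{\}$, where $e^-$ is the erasure of $e$.
   Context: Fix sets $\mathsf{Principals}$ and $\mathsf{Privileges}$ and an access control list $\mathcal{A}:\mathsf{Principals}\to\mathcal{P}(\mathsf{Privileges})$. Language. Types: $t::=\mathtt{bool}\mid t_1\to t_2$. Expressions: $e::=\mathtt{true}\mid x\mid \mathtt{if}\ e\ \mathtt{then}\ e_1\ \mathtt{else}\ e_2\mid \lambda x.e\mid e_1\,e_2\mid \mathtt{letrec}\ f(x)=e_1\ \mathtt{in}\ e_2\mid \mathtt{signs}\ n\ e\mid \mathtt{dopriv}\ p\ \mathtt{in}\ e\mid \mathtt{check}\ p\ \mathtt{for}\ e\mid \mathtt{test}\ p\ \mathtt{then}\ e_1\ \mathtt{else}\ e_2$ ($n$ a principal, $p$ a privilege). Typing $D\vdash e:t$ is simply typed: $\mathtt{letrec}$ typed by $D,f:t_1\to t_2,x:t_1\vdash e_1:t_2$ and $D,f:t_1\to t_2\vdash e_2:t$; $\mathtt{signs},\mathtt{dopriv},\mathtt{check}$ preserve the body type; $\mathtt{test}$, $\mathtt{if}$ need branches of a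 common type ($\mathtt{if}$ a $\mathtt{bool}$ guard). Erasure $(\cdot)^-$ (defined on $\mathtt{test}$-free expressions): $\mathtt{true}^-=\mathtt{true}$, $x^-=x$, $(\mathtt{if}\ e_1\ \mathtt{then}\ e_2\ \mathtt{else}\ e_3)^-=\mathtt{if}\ e_1^-\ \mathtt{then}\ e_2^-\ \mathtt{else}\ e_3^-$, $(\lambda x.e)^-=\lambda x.e^-$, $(e_1e_2)^-=e_1^-e_2^-$, $(\mathtt{letrec}\ f(x)=e_1\ \mathtt{in}\ e_2)^-=\mathtt{letrec}\ f(x)=e_1^-\ \mathtt{in}\ e_2^-$, $(\mathtt{signs}\ n\ e)^-=\mathtt{signs}\ n\ e^-$, $(\mathtt{dopriv}\ p\ \mathtt{in}\ e)^-=e^-$, $(\mathtt{check}\ p\ \mathtt{for}\ e)^-=e^-$. Eager semantics. $\bot,\star$ are two distinct values, neither booleans nor functions. For a cpo $C$, $C_{\bot\star}=C\cup\{\bot,\star\}$ with $u\le v$ iff $u=\bot$ or $u=v$ or $u,v\in C$, $u\le v$. $[\![\mathtt{bool}]\!]=\{\mathsf{true},\mathsf{false}\}$ and $\mathcal{P}(\mathsf{Privileges})$ ordered by equality; $[\![t_1\to t_2]\!]=\mathcal{P}(\mathsf{Privileges})\to[\![t_1]\!]\to[\![t_2]\!]_{\bot\star}$ (continuous, pointwise order). $[\![D]\!]$: records $h$ with $h.x\in[\![D(x)]\!]$; $\{\}$ is the empty record. $[\![D\vdash e:t]\!]\in\mathsf{Principals}\to\mathcal{P}(\mathsf{Privileges})\to[\![D]\!]\to[\![t]\!]_{\bot\star}$,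 written $[\![e]\!]nPh$. ''let $d=E_1$ in $E_2$'' yields $E_1$ if $E_1\in\{\bot,\star\}$, else $E_2$ with $d:=E_1$. $P\sqcup_n\{p\}$ is $P\cup\{p\}$ if $p\in\mathcal{A}(n)$, else $P$. Equations: $[\![\mathtt{true}]\!]nPh=\mathsf{true}$; $[\![x]\!]nPh=h.x$; $[\![\mathtt{if}\ e\ \mathtt{then}\ e_1\ \mathtt{else}\ e_2]\!]nPh=$ let $b=[\![e]\!]nPh$ in (if $b$ then $[\![e_1]\!]nPh$ else $[\![e_2]\!]nPh$); $[\![\lambda x.e]\!]nPh=\lambda P'.\lambda d.[\![e]\!]nP'(h[x\mapsto d])$; $[\![e_1e_2]\!]nPh=$ let $f=[\![e_1]\!]nPh$ in let $d=[\![e_2]\!]nPh$ in $fPd$; $[\![\mathtt{letrec}\ f(x)=e_1\ \mathtt{in}\ e_2]\!]nPh=[\![e_2]\!]nP(h[f\mapsto\mathit{fix}\,G])$ with $G(g)=\lambda P'.\lambda d.[\![e_1]\!]nP'(h[f\mapsto g,x\mapsto d])$ (least fixed point); $[\![\mathtt{signs}\ n'\ e]\!]nPh=[\![e]\!]n'(P\cap\mathcal{A}(n'))h$; $[\![\mathtt{dopriv}\ p\ \mathtt{in}\ e]\!]nPh=[\![e]\!]n(P\sqcup_n\{p\})h$; $[\![\mathtt{check}\ p\ \mathtt{for}\ e]\!]nPh=$ if $p\in P$ then $[\![e]\!]nPh$ else $\star$; $[\![\mathtt{test}\ p\ \mathtt{then}\ e_1\ \mathtt{else}\ e_2]\!]nPh=$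 if $p\in P$ then $[\![e_1]\!]nPh$ else $[\![e_2]\!]nPh$. Static analysis. Annotated types $\theta::=\mathtt{bool}\mid\theta_1\xrightarrow{\Pi}\theta_2$ ($\Pi\subseteq\mathsf{Privileges}$); erasure $\mathtt{bool}^*=\mathtt{bool}$, $(\theta_1\xrightarrow{\Pi}\theta_2)^*=\theta_1^*\to\theta_2^*$. Subtyping: least relation with $\mathtt{bool}\le\mathtt{bool}$ and $\theta_1\xrightarrow{\Pi_1}\theta_1'\le\theta_2\xrightarrow{\Pi_2}\theta_2'$ if $\theta_2\le\theta_1$, $\theta_1'\le\theta_2'$, $\Pi_1\subseteq\Pi_2$. Rules for $\Delta;n\vdash e:\theta,\Pi$ ($\Delta$ maps variables to annotated types): $\mathtt{true}:\mathtt{bool},\varnothing$; $x:\Delta(x),\varnothing$; $\lambda x.e:\theta_1\xrightarrow{\Pi}\theta_2,\varnothing$ if $\Delta,x:\theta_1;n\vdash e:\theta_2,\Pi$; $e_1e_2:\theta_2,\Pi\cup\Pi_1\cup\Pi_2$ if $e_1:\theta_1\xrightarrow{\Pi}\theta_2,\Pi_1$, $e_2:\theta_1',\Pi_2$, $\theta_1'\le\theta_1$; $\mathtt{if}\ e\ \mathtt{then}\ e_1\ \mathtt{else}\ e_2:\theta,\Pi_1\cup\Pi_2\cup\Pi_3$ if $e:\mathtt{bool},\Pi_1$, $e_1:\theta,\Pi_2$, $e_2:\theta,\Pi_3$; $\mathtt{letrec}\ f(x)=e_1\ \mathtt{in}\ e_2:\theta,\Pi\cup\Pi_1$ if $\Delta,f:\theta_1\xrightarrow{\Pi}\theta_2,x:\theta_1;n\vdash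 e_1:\theta_2,\Pi$ and $\Delta,f:\theta_1\xrightarrow{\Pi}\theta_2;n\vdash e_2:\theta,\Pi_1$; $\mathtt{check}\ p\ \mathtt{for}\ e:\theta,\Pi\cup\{p\}$ if $e:\theta,\Pi$; $\mathtt{dopriv}\ p\ \mathtt{in}\ e:\theta,\Pi$ if $e:\theta,\Pi\sqcup_n\{p\}$; $\Delta;n\vdash\mathtt{signs}\ n'\ e:\theta,\Pi$ if $\Delta;n'\vdash e:\theta,\Pi$ and $\Pi\subseteq\mathcal{A}(n')$; $\mathtt{test}\ p\ \mathtt{then}\ e_1\ \mathtt{else}\ e_2:\theta,\Pi_1\cup\Pi_2$ if $e_1:\theta,\Pi_1$, $e_2:\theta,\Pi_2$ (premises under $\Delta;n$ unless stated). *)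

From Stdlib Require Import Arith ClassicalDescription ClassicalEpsilon.

Set Implicit Arguments.

Definition PrivSet (Privilege : Type) := Privilege -> Prop.
Definition subset {X} (A B : PrivSet X) : Prop := forall p, A p -> B p.
Definition union {X} (A B : PrivSet X) : PrivSet X := fun p => A p \/ B p.
Definition inter {X} (A B : PrivSet X) : PrivSet X := fun p => A p /\ B p.
Definition single {X} (p : X) : PrivSet X := fun q => q = p.
Definition empty {X} : PrivSet X := fun _ => False.

Definition var := nat.

Inductive ty : Type :=
| Bool : ty
| Arr : ty -> ty -> ty.

Section Lang.
Variables (Principal Privilege : Type).

Inductive expr : Type :=
| ETrue : expr
| EVar : var -> expr
| EIf : expr -> expr -> expr -> expr
| ELam : var -> expr -> expr
| EApp : expr -> expr -> expr
| ELetrec : var -> var -> expr -> expr -> expr      (* letrec f(x) = e1 in e2 *)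
| ESigns : Principal -> expr -> expr
| EDopriv : Privilege -> expr -> expr
| ECheck : Privilege -> expr -> expr
| ETest : Privilege -> expr -> expr -> expr.

Fixpoint test_free (e : expr) : Prop :=
  match e with
  | ETrue | EVar _ => True
  | EIf e e1 e2 => test_free e /\ test_free e1 /\ test_free e2
  | ELam _ e => test_free e
  | EApp e1 e2 => test_free e1 /\ test_free e2
  | ELetrec _ _ e1 e2 => test_free e1 /\ test_free e2
  | ESigns _ e | EDopriv _ e | ECheck _ e => test_free e
  | ETest _ _ _ => False
  end.

(* Erasure (only meaningful on test-free expressions; the test case is an
   arbitrary choice and is never used under the hypothesis test_free). *)
Fixpoint erase (e : expr) : expr :=
  match e with
  | ETrue => ETrue
  | EVar x => EVar x
  | EIf e1 e2 e3 => EIf (erase e1) (erase e2) (erase e3)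
  | ELam x e => ELam x (erase e)
  | EApp e1 e2 => EApp (erase e1) (erase e2)
  | ELetrec f x e1 e2 => ELetrec f x (erase e1) (erase e2)
  | ESigns n e => ESigns n (erase e)
  | EDopriv _ e => erase e
  | ECheck _ e => erase e
  | ETest p e1 e2 => ETest p (erase e1) (erase e2)
  end.

(* Simple typing D |- e : t  (in Type, so the semantics can recurse on it) *)
Definition ctx := var -> option ty.
Definition ctx0 : ctx := fun _ => None.
Definition ext (D : ctx) (x : var) (t : ty) : ctx :=
  fun y => if Nat.eqb y x then Some t else D y.

Unset Implicit Arguments.
Inductive typing : ctx -> expr -> ty -> Type :=
| T_true D : typing D ETrue Bool
| T_var D x t : D x = Some t -> typing D (EVar x) t
| T_if D e e1 e2 t :
    typing D e Bool -> typing D e1 t -> typing D e2 t -> typing D (EIf e e1 e2) t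
| T_lam D x e t1 t2 : typing (ext D x t1) e t2 -> typing D (ELam x e) (Arr t1 t2)
| T_app D e1 e2 t1 t2 :
    typing D e1 (Arr t1 t2) -> typing D e2 t1 -> typing D (EApp e1 e2) t2
| T_letrec D f x e1 e2 t1 t2 t :
    typing (ext (ext D f (Arr t1 t2)) x t1) e1 t2 ->
    typing (ext D f (Arr t1 t2)) e2 t ->
    typing D (ELetrec f x e1 e2) t
| T_signs D n e t : typing D e t -> typing D (ESigns n e) t
| T_dopriv D p e t : typing D e t -> typing D (EDopriv p e) t
| T_check D p e t : typing D e t -> typing D (ECheck p e) t
| T_test D p e1 e2 t : typing D e1 t -> typing D e2 t -> typing D (ETest p e1 e2) t.
Set Implicit Arguments.

(* Semantic domains.  A poset is a carrier with an order; cpo-ness       *)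
(* (existence of lubs of chains) is a property, not needed to define     *)
(* the semantics.                                                        *)
Record poset := Poset { car :> Type; ord : car -> car -> Prop }.
Arguments Poset : clear implicits.

Inductive lift (A : Type) : Type :=
| Bot : lift A
| Star : lift A
| Val : A -> lift A.
Arguments Bot {A}. Arguments Star {A}.

Definition le_lift (A : Type) (le : A -> A -> Prop) (u v : lift A) : Prop :=
  u = Bot \/ u = v \/ exists a b, u = Val a /\ v = Val b /\ le a b.

Definition lift_poset (C : poset) : poset := Poset (lift C) (le_lift (@ord C)).

Definition is_chain (C : poset) (c : nat -> C) : Prop :=
  forall k, ord C (c k) (c (S k)).
Definition is_lub (C : poset) (c : nat -> C) (l : C) : Prop :=
  (forall k, ord C (c k) l) /\ (forall u, (forall k, ord C (c k) u) -> ord C l u).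

Definition continuous (C1 C2 : poset) (f : C1 -> C2) : Prop :=
  (forall a b, ord C1 a b -> ord C2 (f a) (f b)) /\
  (forall c l, is_chain C1 c -> is_lub C1 c l -> is_lub C2 (fun k => f (c k)) (f l)).

Definition fun_poset (C1 C2 : poset) : poset :=
  Poset { f : PrivSet Privilege -> C1 -> lift C2
        | forall P, continuous C1 (lift_poset C2) (f P) }
        (fun f g => forall P d, le_lift (@ord C2) (proj1_sig f P d) (proj1_sig g P d)).

Definition bool_poset : poset := Poset bool (fun a b => a = b).

Fixpoint dom (t : ty) : poset :=
  match t with
  | Bool => bool_poset
  | Arr t1 t2 => fun_poset (dom t1) (dom t2)
  end.

Definition sem (t : ty) : Type := car (dom t).

Lemma bot_continuous (C1 C2 : poset) :
  continuous C1 (lift_poset C2) (fun _ => Bot).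
Proof.
  split.
  - intros; left; reflexivity.
  - intros c l _ _; split.
    + intros; left; reflexivity.
    + intros; left; reflexivity.
Qed.

Definition bot_fun (t1 t2 : ty) : sem (Arr t1 t2) :=
  exist (fun f : PrivSet Privilege -> dom t1 -> lift (dom t2) =>
           forall P, continuous (dom t1) (lift_poset (dom t2)) (f P))
        (fun _ _ => Bot) (fun _ => bot_continuous (dom t1) (dom t2)).

(* lambda P'. lambda d. F P' d as an element of [[t1 -> t2]]: the
   construction is continuous in all uses (a lemma of the paper); the
   (classical) guard only makes the definition total. *)
Definition mk_fun (t1 t2 : ty) (F : PrivSet Privilege -> sem t1 -> lift (sem t2))
  : sem (Arr t1 t2) :=
  match excluded_middle_informative
          (forall P, continuous (dom t1) (lift_poset (dom t2)) (F P)) with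
  | left H => exist (fun f : PrivSet Privilege -> dom t1 -> lift (dom t2) =>
           forall P, continuous (dom t1) (lift_poset (dom t2)) (f P)) F H
  | right _ => bot_fun t1 t2
  end.

Definition is_least_fp (C : poset) (G : C -> C) (g : C) : Prop :=
  G g = g /\ forall g', G g' = g' -> ord C g g'.

Definition lfp (t1 t2 : ty) (G : sem (Arr t1 t2) -> sem (Arr t1 t2)) : sem (Arr t1 t2) :=
  match excluded_middle_informative (exists g, is_least_fp (dom (Arr t1 t2)) G g) with
  | left H => proj1_sig (constructive_indefinite_description _ H)
  | right _ => bot_fun t1 t2
  end.

Definition sem_opt (o : option ty) : Type :=
  match o with Some t => sem t | None => unit end.
Definition env (D : ctx) : Type := forall y, sem_opt (D y).
Definition env0 : env ctx0 := fun _ => tt.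

Definition upd (D : ctx) (h : env D) (x : var) (t : ty) (v : sem t) : env (ext D x t) :=
  fun y => if Nat.eqb y x as b return sem_opt (if b then Some t else D y)
           then v else h y.

Definition lookup (D : ctx) (h : env D) (x : var) (t : ty) (H : D x = Some t) : sem t :=
  eq_rect (D x) sem_opt (h x) (Some t) H.

Variable A : Principal -> PrivSet Privilege.   (* the access control list *)

Definition mem (P : PrivSet Privilege) (p : Privilege) : bool :=
  if excluded_middle_informative (P p) then true else false.

Definition join (n : Principal) (P : PrivSet Privilege) (p : Privilege) : PrivSet Privilege :=
  if mem (A n) p then union P (single p) else P.

Definition bind (X Y : Type) (u : lift X) (k : X -> lift Y) : lift Y :=
  match u with Bot => Bot | Star => Star | Val x => k x end.

Fixpoint den (D : ctx) (e : expr) (t : ty) (d : typing D e t) {struct d}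
  : Principal -> PrivSet Privilege -> env D -> lift (sem t) :=
  match d in typing D e t return Principal -> PrivSet Privilege -> env D -> lift (sem t) with
  | T_true _ => fun n P h => Val (true : sem Bool)
  | T_var _ x t Hx => fun n P h => Val (@lookup _ h x t Hx)
  | T_if _ _ _ _ _ d0 d1 d2 => fun n P h =>
      bind (den d0 n P h) (fun b : sem Bool => if b then den d1 n P h else den d2 n P h)
  | T_lam _ x _ t1 t2 d0 => fun n P h =>
      Val (@mk_fun t1 t2 (fun P' v => den d0 n P' (@upd _ h x t1 v)))
  | T_app _ _ _ t1 t2 d1 d2 => fun n P h =>
      bind (den d1 n P h) (fun f : sem (Arr t1 t2) =>
        bind (den d2 n P h) (fun v => proj1_sig f P v))
  | T_letrec _ f x _ _ t1 t2 _ d1 d2 => fun n P h =>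
      den d2 n P (@upd _ h f (Arr t1 t2)
        (@lfp t1 t2 (fun g => @mk_fun t1 t2 (fun P' v =>
           den d1 n P' (@upd _ (@upd _ h f (Arr t1 t2) g) x t1 v)))))
  | T_signs _ n' _ _ d0 => fun n P h => den d0 n' (inter P (A n')) h
  | T_dopriv _ p _ _ d0 => fun n P h => den d0 n (join n P p) h
  | T_check _ p _ _ d0 => fun n P h => if mem P p then den d0 n P h else Star
  | T_test _ p _ _ _ d1 d2 => fun n P h => if mem P p then den d1 n P h else den d2 n P h
  end.

Inductive aty : Type :=
| ABool : aty
| AArr : aty -> PrivSet Privilege -> aty -> aty.

Inductive subty : aty -> aty -> Prop :=
| S_bool : subty ABool ABool
| S_arr th1 th1' th2 th2' Pi1 Pi2 :
    subty th2 th1 -> subty th1' th2' -> subset Pi1 Pi2 ->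
    subty (AArr th1 Pi1 th1') (AArr th2 Pi2 th2').

Definition actx := var -> option aty.
Definition actx0 : actx := fun _ => None.
Definition aext (G : actx) (x : var) (th : aty) : actx :=
  fun y => if Nat.eqb y x then Some th else G y.

Inductive sa : actx -> Principal -> expr -> aty -> PrivSet Privilege -> Prop :=
| SA_true G n : sa G n ETrue ABool empty
| SA_var G n x th : G x = Some th -> sa G n (EVar x) th empty
| SA_lam G n x e th1 th2 Pi :
    sa (aext G x th1) n e th2 Pi -> sa G n (ELam x e) (AArr th1 Pi th2) empty
| SA_app G n e1 e2 th1 th1' th2 Pi Pi1 Pi2 :
    sa G n e1 (AArr th1 Pi th2) Pi1 -> sa G n e2 th1' Pi2 -> subty th1' th1 ->
    sa G n (EApp e1 e2) th2 (union Pi (union Pi1 Pi2))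
| SA_if G n e e1 e2 th Pi1 Pi2 Pi3 :
    sa G n e ABool Pi1 -> sa G n e1 th Pi2 -> sa G n e2 th Pi3 ->
    sa G n (EIf e e1 e2) th (union Pi1 (union Pi2 Pi3))
| SA_letrec G n f x e1 e2 th1 th2 th Pi Pi1 :
    sa (aext (aext G f (AArr th1 Pi th2)) x th1) n e1 th2 Pi ->
    sa (aext G f (AArr th1 Pi th2)) n e2 th Pi1 ->
    sa G n (ELetrec f x e1 e2) th (union Pi Pi1)
| SA_check G n p e th Pi :
    sa G n e th Pi -> sa G n (ECheck p e) th (union Pi (single p))
| SA_dopriv G n p e th Pi :
    sa G n e th (join n Pi p) -> sa G n (EDopriv p e) th Pi
| SA_signs G n n' e th Pi :
    sa G n' e th Pi -> subset Pi (A n') -> sa G n (ESigns n' e) th Pi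
| SA_test G n p e1 e2 th Pi1 Pi2 :
    sa G n e1 th Pi1 -> sa G n e2 th Pi2 -> sa G n (ETest p e1 e2) th (union Pi1 Pi2).

End Lang.

(* A logical relation indexed by annotated types relates the denotation of a
   test-free expression, run with privileges containing its effect, to the
   denotation of its erasure, run with arbitrary privileges: related booleans are
   equal, and related functions called with enough privileges for their latent
   effect give related results.  The relation is proved by induction on the
   static analysis; as the effect is below the privileges, every [check] passes,
   so [Star] never arises, and [dopriv] only enlarges the privileges.
   Lambdas and [letrec] are interpreted through [mk_fun] and [lfp], whose guards
   ask for continuity and for a least fixed point.  Both hold because every
   denotation is Scott-continuous in its environment, and then [lfp] is the lub of
   the Kleene iterates, so [letrec] is handled by fixed-point induction for the
   (admissible) relation. *)

From Stdlib Require Import Arith Lia ClassicalDescription ClassicalEpsilon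
  FunctionalExtensionality ProofIrrelevance Program.Equality.

Arguments Bot {A}. Arguments Star {A}. Arguments Val {A} _.

Definition partial_order (C : poset) : Prop :=
  (forall a, ord C a a) /\
  (forall a b c, ord C a b -> ord C b c -> ord C a c) /\
  (forall a b, ord C a b -> ord C b a -> a = b).

Definition cpo (C : poset) : Prop :=
  partial_order C /\ forall c, is_chain C c -> exists l, is_lub C c l.

Section PartialOrder.
Variable C : poset.
Hypothesis HC : partial_order C.

Lemma ord_refl a : ord C a a.
Proof. apply HC. Qed.

Lemma ord_trans a b c : ord C a b -> ord C b c -> ord C a c.
Proof. apply HC. Qed.

Lemma ord_antisym a b : ord C a b -> ord C b a -> a = b.
Proof. apply HC. Qed.

Lemma chain_mono c i j : is_chain C c -> i <= j -> ord C (c i) (c j).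
Proof.
  intros Hc Hij; induction Hij; [apply ord_refl | eapply ord_trans; eauto].
Qed.

Lemma is_lub_unique c l l' : is_lub C c l -> is_lub C c l' -> l = l'.
Proof. intros [H1 H2] [H3 H4]; apply ord_antisym; auto. Qed.

Lemma is_lub_const c a : (forall k, c k = a) -> is_lub C c a.
Proof.
  intros Hc; split.
  - intros k; rewrite Hc; apply ord_refl.
  - intros u Hu; rewrite <- (Hc 0); apply Hu.
Qed.

Lemma is_lub_ext c c' l : (forall k, c k = c' k) -> is_lub C c' l -> is_lub C c l.
Proof. intros H; replace c with c'; [auto | apply functional_extensionality; auto]. Qed.

Lemma is_lub_shift c m l :
  is_chain C c -> is_lub C (fun j => c (j + m)) l <-> is_lub C c l.
Proof.
  intros Hc.
  assert (Hcm : forall k u, ord C (c (k + m)) u -> ord C (c k) u)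
    by (intros k u; apply ord_trans, chain_mono; [exact Hc | lia]).
  split; intros [Hup Hleast]; split; auto.
Qed.

Section Diagonal.
Variable a : nat -> nat -> C.
Hypothesis a_mono : forall k k' j j', k <= k' -> j <= j' -> ord C (a k j) (a k' j').

Lemma is_lub_diag_of_rows r L :
  (forall k, is_lub C (a k) (r k)) -> is_lub C r L -> is_lub C (fun k => a k k) L.
Proof.
  intros Hr [Hup Hleast]; split.
  - intros k; eapply ord_trans; [apply (proj1 (Hr k)) | apply Hup].
  - intros u Hu; apply Hleast; intros k; apply (proj2 (Hr k)); intros j.
    eapply ord_trans; [apply a_mono with (k' := max k j) (j' := max k j); lia | apply Hu].
Qed.

Lemma is_lub_cols_of_diag s L :
  (forall j, is_lub C (fun k => a k j) (s j)) -> is_lub C (fun k => a k k) L -> is_lub C s L.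
Proof.
  intros Hs [Hup Hleast]; split.
  - intros j; apply (proj2 (Hs j)); intros k.
    eapply ord_trans; [apply a_mono with (k' := max k j) (j' := max k j); lia | apply Hup].
  - intros u Hu; apply Hleast; intros k; eapply ord_trans; [apply (proj1 (Hs k)) | apply Hu].
Qed.

End Diagonal.
End PartialOrder.

Section Lift.
Variable C : poset.
Hypothesis HC : partial_order C.
Notation LC := (lift_poset C).

Lemma lift_partial_order : partial_order LC.
Proof.
  split; [|split].
  - intros a; right; left; reflexivity.
  - intros a b c [->|[->|(x&y&->&->&Hxy)]] Hbc; [left; reflexivity | exact Hbc |].
    destruct Hbc as [H|[<-|(x'&z&Hx'&->&Hyz)]]; [discriminate | right; right; eauto |].
    injection Hx' as <-; right; right; exists x, z; eauto using ord_trans.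
  - intros a b [->|[->|(x&y&->&->&Hxy)]] Hba; auto.
    + destruct Hba as [->|[->|(?&?&?&?&?)]]; auto; discriminate.
    + destruct Hba as [H|[H|(y'&x'&Hy'&Hx'&Hyx)]]; try discriminate; auto.
      injection Hy' as <-; injection Hx' as <-; f_equal; now apply ord_antisym.
Qed.

Lemma le_lift_Val_l a v : ord LC (Val a) v -> exists b, v = Val b /\ ord C a b.
Proof.
  intros [H|[<-|(x&y&Hx&->&H)]]; [discriminate | eauto using ord_refl |].
  injection Hx as <-; eauto.
Qed.

Lemma le_lift_Star_l v : ord LC Star v -> v = Star.
Proof. intros [H|[H|(x&y&H&_)]]; congruence. Qed.

Lemma le_lift_Star_r u : ord LC u Star -> u = Bot \/ u = Star.
Proof. intros [H|[H|(x&y&_&H&_)]]; auto; discriminate. Qed.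

Lemma le_lift_Val a b : ord C a b -> ord LC (Val a) (Val b).
Proof. right; right; eauto. Qed.

Lemma is_lub_Val a al : is_lub C a al -> is_lub LC (fun k => Val (a k)) (Val al).
Proof.
  intros [Hup Hleast]; split.
  - intros k; apply le_lift_Val, Hup.
  - intros v Hv; destruct (le_lift_Val_l _ _ (Hv 0)) as [b [-> _]].
    apply le_lift_Val, Hleast; intros k.
    destruct (le_lift_Val_l _ _ (Hv k)) as [b' [[= <-] H]]; exact H.
Qed.

Lemma lift_chain_cases u :
  is_chain LC u ->
  (forall k, u k = Bot) \/ (exists k, u k = Star) \/
  (exists k0 a, is_chain C a /\ forall j, u (j + k0) = Val (a j)).
Proof.
  intros Hu.
  destruct (classic (exists k, u k = Star)) as [HStar|HnStar]; [now right; left|].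
  destruct (classic (exists k a, u k = Val a)) as [(k0&a0&Hk0)|HnVal].
  - right; right; exists k0.
    assert (Hval : forall j, exists b, u (j + k0) = Val b).
    { induction j as [|j [b Hb]]; [eauto|].
      destruct (le_lift_Val_l b (u (S j + k0))) as [b' [Hb' _]]; [rewrite <- Hb; apply Hu | eauto]. }
    destruct (choice _ Hval) as [a Ha]; exists a; split; [|exact Ha].
    intros j; specialize (Hu (j + k0)); rewrite Ha in Hu.
    change (S (j + k0)) with (S j + k0) in Hu; rewrite Ha in Hu.
    now destruct (le_lift_Val_l _ _ Hu) as [b [[= <-] Hab]].
  - left; intros k; destruct (u k) eqn:E; eauto; exfalso; eauto.
Qed.

Lemma is_lub_lift_Star u k : is_chain LC u -> u k = Star -> is_lub LC u Star.
Proof.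
  intros Hu Hk; split.
  - intros j; destruct (le_lt_dec k j) as [Hkj|Hjk].
    + rewrite (le_lift_Star_l (u j)); [apply ord_refl, lift_partial_order|].
      rewrite <- Hk; apply (chain_mono _ lift_partial_order); auto.
    + assert (H : ord LC (u j) Star)
        by (rewrite <- Hk; apply (chain_mono _ lift_partial_order); auto; lia).
      destruct (le_lift_Star_r _ H) as [-> | ->]; [left | right; left]; reflexivity.
  - intros v Hv; specialize (Hv k); rewrite Hk in Hv.
    rewrite (le_lift_Star_l v Hv); right; left; reflexivity.
Qed.

Lemma is_lub_lift_Val u k0 a al :
  is_chain LC u -> (forall j, u (j + k0) = Val (a j)) -> is_lub C a al -> is_lub LC u (Val al).
Proof.
  intros Hu Hua Hal; apply (is_lub_shift _ lift_partial_order u k0); [exact Hu|].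
  apply (is_lub_ext LC _ (fun j => Val (a j))); [exact Hua | now apply is_lub_Val].
Qed.

End Lift.

Lemma lift_cpo C : cpo C -> cpo (lift_poset C).
Proof.
  intros [HC Hlub]; pose proof (lift_partial_order C HC) as HL; split; [exact HL|].
  intros u Hu; destruct (lift_chain_cases C HC u Hu) as [HBot|[[k Hk]|(k0&a&Ha&Hua)]].
  - exists Bot; now apply (is_lub_const _ HL).
  - exists Star; now apply (is_lub_lift_Star C HC) with k.
  - destruct (Hlub a Ha) as [al Hal]; exists (Val al); now apply (is_lub_lift_Val C HC) with k0 a.
Qed.

Lemma is_lub_lift_inv C u ul :
  cpo C -> is_chain (lift_poset C) u -> is_lub (lift_poset C) u ul ->
  ((forall k, u k = Bot) /\ ul = Bot) \/
  ((exists k, u k = Star) /\ ul = Star) \/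
  (exists k0 a al, is_chain C a /\ (forall j, u (j + k0) = Val (a j)) /\
                   is_lub C a al /\ ul = Val al).
Proof.
  intros [HC Hlub] Hu Hul; pose proof (lift_partial_order C HC) as HL.
  pose proof (is_lub_unique _ HL u ul) as Huniq.
  destruct (lift_chain_cases C HC u Hu) as [HBot|[[k Hk]|(k0&a&Ha&Hua)]].
  - left; split; auto; apply Huniq; [exact Hul|]; now apply (is_lub_const _ HL).
  - right; left; split; eauto; apply Huniq; [exact Hul|]; now apply (is_lub_lift_Star C HC) with k.
  - destruct (Hlub a Ha) as [al Hal]; right; right; exists k0, a, al; do 3 (split; auto).
    apply Huniq; [exact Hul|]; now apply (is_lub_lift_Val C HC) with k0 a.
Qed.

Section Bind.
Variables X Y : poset.
Hypothesis HX : cpo X.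
Hypothesis HY : partial_order Y.

Lemma bind_mono (u u' : lift X) (K K' : X -> lift Y) :
  ord (lift_poset X) u u' ->
  (forall x x', ord X x x' -> ord (lift_poset Y) (K x) (K' x')) ->
  ord (lift_poset Y) (bind u K) (bind u' K').
Proof.
  intros [->|[<-|(x&y&->&->&Hxy)]] HK; simpl.
  - left; reflexivity.
  - destruct u; simpl; [left; reflexivity | right; left; reflexivity | apply HK, ord_refl, HX].
  - now apply HK.
Qed.

(* [K k] is the continuation used at stage [k]; continuity is only asked along
   shifted diagonals. *)
Lemma is_lub_bind (u : nat -> lift X) ul (K : nat -> X -> lift Y) Kl :
  is_chain (lift_poset X) u -> is_lub (lift_poset X) u ul ->
  (forall k x x', ord X x x' -> ord (lift_poset Y) (K k x) (K (S k) x')) ->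
  (forall a al m, is_chain X a -> is_lub X a al ->
     is_lub (lift_poset Y) (fun j => K (j + m) (a j)) (Kl al)) ->
  is_lub (lift_poset Y) (fun k => bind (u k) (K k)) (bind ul Kl).
Proof.
  intros Hu Hul HKmono HKlub.
  assert (Hch : is_chain (lift_poset Y) (fun k => bind (u k) (K k)))
    by (intros k; apply bind_mono; [apply Hu | apply HKmono]).
  destruct (is_lub_lift_inv X u ul HX Hu Hul)
    as [[HBot ->]|[[[k Hk] ->]|(k0&a&al&Ha&Hua&Hal&->)]].
  - apply (is_lub_const _ (lift_partial_order Y HY)); intros k; now rewrite HBot.
  - apply (is_lub_lift_Star Y HY _ k); [exact Hch | now rewrite Hk].
  - apply (is_lub_shift _ (lift_partial_order Y HY) _ k0); [exact Hch|].
    apply (is_lub_ext (lift_poset Y) _ (fun j => K (j + k0) (a j))); [intros j; now rewrite Hua | now apply HKlub].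
Qed.

End Bind.

Section FunctionSpace.
Variable Privilege : Type.
Variables C1 C2 : poset.
Notation FC := (fun_poset Privilege C1 C2).
Notation LC2 := (lift_poset C2).

Lemma fun_partial_order : partial_order C2 -> partial_order FC.
Proof.
  intros H2; pose proof (lift_partial_order C2 H2) as HL; split; [|split].
  - intros f P d; apply (ord_refl _ HL).
  - intros f g h Hfg Hgh P d; apply (ord_trans _ HL _ _ _ (Hfg P d) (Hgh P d)).
  - intros [f Hf] [g Hg] Hfg Hgf; simpl in *.
    assert (f = g) as <-.
    { do 2 (apply functional_extensionality; intros).
      apply (ord_antisym _ HL); [apply Hfg | apply Hgf]. }
    f_equal; apply proof_irrelevance.
Qed.

Lemma is_lub_pointwise (c : nat -> FC) (l : FC) :
  (forall P d, is_lub LC2 (fun k => proj1_sig (c k) P d) (proj1_sig l P d)) -> is_lub FC c l.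
Proof.
  intros H; split.
  - intros k P d; apply (H P d).
  - intros u Hu P d; apply (H P d); intros k; apply Hu.
Qed.

Hypothesis H1 : cpo C1.
Hypothesis H2 : cpo C2.

(* The pointwise lub is again continuous because the two limits commute. *)
Lemma fun_chain_pointwise_lub c :
  is_chain FC c -> exists l : FC, forall P d,
    is_lub LC2 (fun k => proj1_sig (c k) P d) (proj1_sig l P d).
Proof.
  intros Hc.
  pose proof (lift_partial_order C2 (proj1 H2)) as HL.
  assert (Hch : forall P d, is_chain LC2 (fun k => proj1_sig (c k) P d))
    by (intros P d k; apply Hc).
  destruct (choice (fun (Pd : PrivSet Privilege * C1) m =>
              is_lub LC2 (fun k => proj1_sig (c k) (fst Pd) (snd Pd)) m))
    as [m Hm]; [intros [P d]; apply (lift_cpo C2 H2), Hch|].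
  assert (Hcont : forall P, continuous C1 LC2 (fun d => m (P, d))).
  { intros P; split.
    - intros d d' Hdd'; apply (Hm (P, d)); intros k; eapply ord_trans; [exact HL | |].
      + apply (proj1 (proj2_sig (c k) P)); exact Hdd'.
      + apply (Hm (P, d')).
    - intros dj dl Hdj Hdl.
      set (a := fun k j => proj1_sig (c k) P (dj j)).
      assert (Ha : forall k k' j j', k <= k' -> j <= j' -> ord LC2 (a k j) (a k' j')).
      { intros k k' j j' Hk Hj; apply (ord_trans _ HL _ (proj1_sig (c k) P (dj j'))).
        - apply (proj1 (proj2_sig (c k) P)), (chain_mono _ (proj1 H1)); auto.
        - apply (chain_mono _ (fun_partial_order (proj1 H2)) c k k'); auto. }
      apply (is_lub_cols_of_diag _ HL a Ha); [intros j; apply (Hm (P, dj j))|].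
      apply (is_lub_diag_of_rows _ HL a Ha (fun k => proj1_sig (c k) P dl)).
      + intros k; apply (proj2 (proj2_sig (c k) P)); auto.
      + apply (Hm (P, dl)). }
  exists (exist _ (fun P d => m (P, d)) Hcont); intros P d; apply (Hm (P, d)).
Qed.

Lemma fun_cpo : cpo FC.
Proof.
  split; [apply fun_partial_order, H2|].
  intros c Hc; destruct (fun_chain_pointwise_lub c Hc) as [l Hl].
  exists l; now apply is_lub_pointwise.
Qed.

Lemma is_lub_fun_pointwise c l :
  is_chain FC c -> is_lub FC c l ->
  forall P d, is_lub LC2 (fun k => proj1_sig (c k) P d) (proj1_sig l P d).
Proof.
  intros Hc Hl; destruct (fun_chain_pointwise_lub c Hc) as [l' Hl'].
  replace l with l'; [exact Hl'|].
  apply (is_lub_unique _ (fun_partial_order (proj1 H2)) c); [now apply is_lub_pointwise | exact Hl].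
Qed.

End FunctionSpace.

Lemma bool_chain_const a : is_chain bool_poset a -> forall j, a j = a 0.
Proof. intros Ha j; induction j as [|j IH]; [reflexivity | rewrite <- IH; symmetry; apply Ha]. Qed.

Lemma bool_cpo : cpo bool_poset.
Proof.
  assert (Hpo : partial_order bool_poset) by (repeat split; simpl; intros; subst; auto).
  split; [exact Hpo|]; intros c Hc; exists (c 0).
  now apply (is_lub_const _ Hpo), bool_chain_const.
Qed.

Lemma bool_lub_const a al : is_chain bool_poset a -> is_lub bool_poset a al -> forall j, a j = al.
Proof.
  intros Ha Hal j; rewrite (bool_chain_const a Ha j).
  apply (is_lub_unique _ (proj1 bool_cpo) a); [|exact Hal].
  now apply (is_lub_const _ (proj1 bool_cpo)), bool_chain_const.
Qed.

Lemma dom_cpo Privilege t : cpo (dom Privilege t).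
Proof. induction t; simpl; [apply bool_cpo | now apply fun_cpo]. Qed.

Section Environments.
Variable Privilege : Type.
Notation dm := (dom Privilege).
Notation env := (env Privilege).

Definition opt_ord (o : option ty) : sem_opt Privilege o -> sem_opt Privilege o -> Prop :=
  match o with Some t => ord (dm t) | None => fun _ _ => True end.

Definition opt_is_lub (o : option ty) : (nat -> sem_opt Privilege o) -> sem_opt Privilege o -> Prop :=
  match o with Some t => is_lub (dm t) | None => fun _ _ => True end.

Definition env_le D (h h' : env D) : Prop := forall y, opt_ord (D y) (h y) (h' y).
Definition env_chain D (c : nat -> env D) : Prop := forall k, env_le D (c k) (c (S k)).
Definition env_lub D (c : nat -> env D) (l : env D) : Prop :=
  forall y, opt_is_lub (D y) (fun k => c k y) (l y).

Lemma opt_ord_refl o a : opt_ord o a a.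
Proof. destruct o; simpl; [apply ord_refl, dom_cpo | exact I]. Qed.

Lemma opt_ord_trans o a b c : opt_ord o a b -> opt_ord o b c -> opt_ord o a c.
Proof. destruct o; simpl; [apply ord_trans, dom_cpo | auto]. Qed.

Lemma opt_is_lub_const o a : opt_is_lub o (fun _ => a) a.
Proof. destruct o; simpl; [now apply (is_lub_const _ (proj1 (dom_cpo _ t))) | exact I]. Qed.

Lemma opt_is_lub_upper o s L k : opt_is_lub o s L -> opt_ord o (s k) L.
Proof. destruct o; simpl; [intros Hl; apply Hl | auto]. Qed.

Lemma opt_is_lub_shift o s L m :
  (forall k, opt_ord o (s k) (s (S k))) -> opt_is_lub o s L -> opt_is_lub o (fun j => s (j + m)) L.
Proof. destruct o as [t|]; simpl; [intros; now apply (is_lub_shift _ (proj1 (dom_cpo _ t))) | auto]. Qed.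

Lemma opt_ord_cast o t (H : o = Some t) a b :
  opt_ord o a b -> ord (dm t) (eq_rect o (sem_opt Privilege) a _ H) (eq_rect o _ b _ H).
Proof. now subst. Qed.

Lemma opt_is_lub_cast o t (H : o = Some t) s L :
  opt_is_lub o s L ->
  is_lub (dm t) (fun k => eq_rect o (sem_opt Privilege) (s k) _ H) (eq_rect o _ L _ H).
Proof. now subst. Qed.

Lemma env_le_refl D h : env_le D h h.
Proof. intros y; apply opt_ord_refl. Qed.

Lemma env_chain_mono D c i j : env_chain D c -> i <= j -> env_le D (c i) (c j).
Proof.
  intros Hc Hij y; induction Hij; [apply opt_ord_refl | eapply opt_ord_trans; [exact IHHij | apply Hc]].
Qed.

Lemma env_lub_const D h : env_lub D (fun _ => h) h.
Proof. intros y; apply opt_is_lub_const. Qed.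

Lemma env_lub_upper D c l k : env_lub D c l -> env_le D (c k) l.
Proof. intros Hl y; apply (opt_is_lub_upper _ (fun k => c k y)), Hl. Qed.

Lemma env_chain_shift D c m : env_chain D c -> env_chain D (fun j => c (j + m)).
Proof. intros Hc k; apply Hc. Qed.

Lemma env_lub_shift D c l m : env_chain D c -> env_lub D c l -> env_lub D (fun j => c (j + m)) l.
Proof.
  intros Hc Hl y; apply (opt_is_lub_shift _ (fun k => c k y)); [intros k; apply Hc | apply Hl].
Qed.

Lemma upd_le D (h h' : env D) x t v v' :
  env_le D h h' -> ord (dm t) v v' -> env_le (ext D x t) (upd h x t v) (upd h' x t v').
Proof. intros Hh Hv y; unfold upd, ext; destruct (Nat.eqb y x); simpl; auto. Qed.

Lemma upd_lub D (c : nat -> env D) l x t (v : nat -> sem Privilege t) vl :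
  env_lub D c l -> is_lub (dm t) v vl ->
  env_lub (ext D x t) (fun k => upd (c k) x t (v k)) (upd l x t vl).
Proof. intros Hl Hv y; unfold upd, ext; destruct (Nat.eqb y x); simpl; auto. Qed.

Definition env_continuous D (C : poset) (F : env D -> C) : Prop :=
  (forall h h', env_le D h h' -> ord C (F h) (F h')) /\
  (forall c l, env_chain D c -> env_lub D c l -> is_lub C (fun k => F (c k)) (F l)).

Lemma env_continuous_const D (C : poset) (a : C) :
  partial_order C -> env_continuous D C (fun _ => a).
Proof. intros HC; split; intros; [apply ord_refl | apply is_lub_const]; auto. Qed.

Lemma env_continuous_Val D (C : poset) F :
  partial_order C -> env_continuous D C F -> env_continuous D (lift_poset C) (fun h => Val (F h)).
Proof.
  intros HC [Hmono Hlub]; split; intros.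
  - now apply le_lift_Val, Hmono.
  - now apply is_lub_Val, Hlub.
Qed.

Lemma env_continuous_lookup D x t (Hx : D x = Some t) :
  env_continuous D (dm t) (fun h => lookup h x Hx).
Proof.
  unfold lookup; split.
  - intros h h' Hh; apply opt_ord_cast, Hh.
  - intros c l _ Hl; apply (opt_is_lub_cast _ _ Hx (fun k => c k x)), Hl.
Qed.

Lemma env_continuous_upd D x t (C : poset) (G : env (ext D x t) -> C) V :
  env_continuous (ext D x t) C G -> env_continuous D (dm t) V ->
  env_continuous D C (fun h => G (upd h x t (V h))).
Proof.
  intros [HGmono HGlub] [HVmono HVlub]; split.
  - intros h h' Hh; apply HGmono, upd_le; auto.
  - intros c l Hc Hl; apply (HGlub (fun k => upd (c k) x t (V (c k)))).
    + intros k; apply upd_le; auto.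
    + apply upd_lub; auto.
Qed.

Lemma continuous_upd D x t (C : poset) (G : env (ext D x t) -> C) h :
  env_continuous (ext D x t) C G -> continuous (dm t) C (fun v => G (upd h x t v)).
Proof.
  intros [HGmono HGlub]; split.
  - intros v v' Hv; apply HGmono, upd_le; [apply env_le_refl | exact Hv].
  - intros vc vl Hvc Hvl; apply (HGlub (fun k => upd h x t (vc k))).
    + intros k; apply upd_le; [apply env_le_refl | apply Hvc].
    + apply upd_lub; [apply env_lub_const | exact Hvl].
Qed.

(* Separate continuity in the environment and in the bound value gives the joint
   continuity required by [is_lub_bind] (diagonal lemma). *)
Lemma env_continuous_bind D (X Y : poset) (F : env D -> lift X) (K : env D -> X -> lift Y) :
  cpo X -> partial_order Y ->
  env_continuous D (lift_poset X) F ->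
  (forall x, env_continuous D (lift_poset Y) (fun h => K h x)) ->
  (forall h, continuous X (lift_poset Y) (K h)) ->
  env_continuous D (lift_poset Y) (fun h => bind (F h) (K h)).
Proof.
  intros HX HY [HFmono HFlub] HKenv HKval.
  pose proof (lift_partial_order Y HY) as HLY.
  assert (HKmono : forall h h' x x', env_le D h h' -> ord X x x' ->
                     ord (lift_poset Y) (K h x) (K h' x')).
  { intros h h' x x' Hh Hx; apply (ord_trans _ HLY _ (K h x')).
    - now apply (proj1 (HKval h)).
    - now apply (proj1 (HKenv x')). }
  split.
  - intros h h' Hh; apply bind_mono; auto.
  - intros c l Hc Hl; apply is_lub_bind; auto; [intros k; apply HFmono, Hc|].
    intros a al m Ha Hal.
    apply (is_lub_diag_of_rows _ HLY (fun k j => K (c (k + m)) (a j)))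
      with (r := fun k => K (c (k + m)) al).
    + intros k k' j j' Hk Hj; apply HKmono.
      * apply env_chain_mono; [exact Hc | lia].
      * now apply (chain_mono _ (proj1 HX)).
    + intros k; now apply (proj2 (HKval (c (k + m)))).
    + apply (proj2 (HKenv al)); [now apply env_chain_shift | now apply env_lub_shift].
Qed.

End Environments.

Lemma proj1_sig_mk_fun Privilege t1 t2 F :
  (forall P, continuous (dom Privilege t1) (lift_poset (dom Privilege t2)) (F P)) ->
  proj1_sig (mk_fun t1 t2 F) = F.
Proof. intros HF; unfold mk_fun; destruct excluded_middle_informative; [reflexivity | contradiction]. Qed.

Lemma bot_fun_least Privilege t1 t2 g : ord (dom Privilege (Arr t1 t2)) (bot_fun Privilege t1 t2) g.
Proof. intros P d; left; reflexivity. Qed.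

Lemma bool_continuous (C : poset) (F : bool -> C) : partial_order C -> continuous bool_poset C F.
Proof.
  intros HC; split.
  - intros b b' <-; apply ord_refl, HC.
  - intros c l Hc Hl; apply (is_lub_const _ HC); intros k; now rewrite (bool_lub_const c l Hc Hl k).
Qed.

Lemma continuous_bind_apply Privilege (C1 C2 : poset) (u : lift C1) P :
  cpo C1 -> cpo C2 ->
  continuous (fun_poset Privilege C1 C2) (lift_poset C2) (fun g => bind u (proj1_sig g P)).
Proof.
  intros H1 H2; pose proof (lift_partial_order C2 (proj1 H2)) as HL; split.
  - intros g g' Hg; destruct u; simpl; [left; reflexivity | right; left; reflexivity | apply Hg].
  - intros c l Hc Hl; destruct u as [| |v]; simpl.
    + now apply (is_lub_const _ HL).
    + now apply (is_lub_const _ HL).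
    + now apply is_lub_fun_pointwise.
Qed.

Section Abstraction.
Variable Privilege : Type.
Notation dm := (dom Privilege).
Variables (D : ctx) (x : var) (t1 t2 : ty).
Variable F : PrivSet Privilege -> env Privilege (ext D x t1) -> lift (sem Privilege t2).
Hypothesis HF : forall P, env_continuous Privilege _ (lift_poset (dm t2)) (F P).

Definition lam_fun (h : env Privilege D) : sem Privilege (Arr t1 t2) :=
  mk_fun t1 t2 (fun P v => F P (upd h x t1 v)).

Lemma lam_fun_apply h P v : proj1_sig (lam_fun h) P v = F P (upd h x t1 v).
Proof. unfold lam_fun; rewrite proj1_sig_mk_fun; [reflexivity|]; intros P'; now apply continuous_upd. Qed.

Lemma env_continuous_lam_fun : env_continuous Privilege D (dm (Arr t1 t2)) lam_fun.
Proof.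
  assert (HFd : forall P v, env_continuous Privilege D (lift_poset (dm t2))
                              (fun h => F P (upd h x t1 v))).
  { intros P v; apply env_continuous_upd; [apply HF|].
    apply env_continuous_const, dom_cpo. }
  split.
  - intros h h' Hh P v; rewrite !lam_fun_apply; now apply (HFd P v).
  - intros c l Hc Hl; apply is_lub_pointwise; intros P v.
    apply (is_lub_ext (lift_poset (dm t2)) _ (fun k => F P (upd (c k) x t1 v)));
      [intros k; apply lam_fun_apply|].
    rewrite lam_fun_apply; now apply (HFd P v).
Qed.

End Abstraction.

Section FixedPoint.
Variable Privilege : Type.
Notation dm := (dom Privilege).
Variables (D : ctx) (f : var) (t1 t2 : ty).
Notation T := (Arr t1 t2).
Variable Ph : env Privilege (ext D f T) -> sem Privilege T.
Hypothesis HPh : env_continuous Privilege _ (dm T) Ph.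

Let HT : partial_order (dm T) := proj1 (dom_cpo Privilege T).

Fixpoint kleene_iter (h : env Privilege D) (j : nat) : sem Privilege T :=
  match j with
  | 0 => bot_fun Privilege t1 t2
  | S j => Ph (upd h f T (kleene_iter h j))
  end.

Lemma kleene_iter_chain h : is_chain (dm T) (kleene_iter h).
Proof.
  intros j; induction j as [|j IH]; [apply bot_fun_least|].
  apply (proj1 HPh), upd_le; [apply env_le_refl | exact IH].
Qed.

Lemma kleene_iter_mono h h' j : env_le Privilege D h h' -> ord (dm T) (kleene_iter h j) (kleene_iter h' j).
Proof.
  intros Hh; induction j as [|j IH]; [apply bot_fun_least|].
  apply (proj1 HPh), upd_le; auto.
Qed.

(* Kleene's theorem; in particular the guard in the definition of [lfp] holds. *)
Lemma lfp_is_lub_kleene_iter h : is_lub (dm T) (kleene_iter h) (lfp (fun g => Ph (upd h f T g))).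
Proof.
  destruct (proj2 (dom_cpo Privilege T) _ (kleene_iter_chain h)) as [L HL].
  assert (Hfix : Ph (upd h f T L) = L).
  { apply (is_lub_unique _ HT (fun j => kleene_iter h (S j))).
    - apply (proj2 HPh (fun j => upd h f T (kleene_iter h j))).
      + intros j; apply upd_le; [apply env_le_refl | apply kleene_iter_chain].
      + apply upd_lub; [apply env_lub_const | exact HL].
    - apply (is_lub_ext _ _ (fun j => kleene_iter h (j + 1))); [intros j; now rewrite Nat.add_1_r|].
      now apply (is_lub_shift _ HT _ 1 _ (kleene_iter_chain h)). }
  assert (Hleast : forall g, Ph (upd h f T g) = g -> ord (dm T) L g).
  { intros g Hg; apply (proj2 HL); intros j; induction j as [|j IH]; [apply bot_fun_least|].
    simpl; rewrite <- Hg; apply (proj1 HPh), upd_le; [apply env_le_refl | exact IH]. }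
  replace (lfp _) with L; [exact HL|]; unfold lfp.
  destruct excluded_middle_informative as [Hex|Hnex].
  - destruct constructive_indefinite_description as [g [Hgfix Hgleast]]; simpl.
    apply (ord_antisym _ HT); auto.
  - exfalso; apply Hnex; exists L; split; auto.
Qed.

Lemma env_continuous_lfp : env_continuous Privilege D (dm T) (fun h => lfp (fun g => Ph (upd h f T g))).
Proof.
  assert (Hmono : forall h h', env_le Privilege D h h' ->
            ord (dm T) (lfp (fun g => Ph (upd h f T g))) (lfp (fun g => Ph (upd h' f T g)))).
  { intros h h' Hh; apply (proj2 (lfp_is_lub_kleene_iter h)); intros j.
    eapply (ord_trans _ HT); [now apply kleene_iter_mono | apply lfp_is_lub_kleene_iter]. }
  split; [exact Hmono|]; intros c l Hc Hl.
  assert (Hiter : forall j, is_lub (dm T) (fun k => kleene_iter (c k) j) (kleene_iter l j)).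
  { induction j as [|j IH]; simpl; [now apply (is_lub_const _ HT)|].
    apply (proj2 HPh (fun k => upd (c k) f T (kleene_iter (c k) j))).
    - intros k; apply upd_le; [apply Hc | now apply kleene_iter_mono].
    - now apply upd_lub. }
  split.
  - intros k; apply Hmono, env_lub_upper, Hl.
  - intros u Hu; apply (proj2 (lfp_is_lub_kleene_iter l)); intros j; apply (Hiter j); intros k.
    eapply (ord_trans _ HT); [apply lfp_is_lub_kleene_iter | apply Hu].
Qed.

End FixedPoint.

Section Denotation.
Variables Principal Privilege : Type.
Variable A : Principal -> PrivSet Privilege.
Notation dm := (dom Privilege).

Lemma den_env_continuous D e t (d : typing Principal Privilege D e t) n P :
  env_continuous Privilege D (lift_poset (dm t)) (den A d n P).
Proof.
  revert n P; induction d; intros n0 P; simpl.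
  - apply env_continuous_const, lift_partial_order, bool_cpo.
  - apply env_continuous_Val; [apply dom_cpo|]; apply env_continuous_lookup.
  - apply env_continuous_bind; [apply bool_cpo | apply dom_cpo | apply IHd1 | |].
    + intros []; auto.
    + intros h; apply bool_continuous, lift_partial_order, dom_cpo.
  - apply (env_continuous_Val _ _ _ (lam_fun Privilege D x t1 t2 (den A d n0)));
      [apply dom_cpo | now apply env_continuous_lam_fun].
  - apply env_continuous_bind; [apply dom_cpo | apply dom_cpo | apply IHd1 | |].
    + intros g; apply env_continuous_bind; [apply dom_cpo | apply dom_cpo | apply IHd2 | |].
      * intros v; apply env_continuous_const, lift_partial_order, dom_cpo.
      * intros h; apply (proj2_sig g).
    + intros h; apply continuous_bind_apply; apply dom_cpo.
  - apply (env_continuous_upd _ _ _ _ (lift_poset (dm t)) (den A d2 n0 P)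
             (fun h => lfp (fun g => lam_fun Privilege _ x t1 t2 (den A d1 n0) (upd h f _ g))));
      [apply IHd2|].
    apply env_continuous_lfp, env_continuous_lam_fun; auto.
  - apply IHd.
  - apply IHd.
  - destruct (mem P p); [apply IHd | apply env_continuous_const, lift_partial_order, dom_cpo].
  - destruct (mem P p); [apply IHd1 | apply IHd2].
Qed.

Lemma mk_fun_den_apply D x t1 t2 e (d : typing Principal Privilege (ext D x t1) e t2) n h P' v :
  proj1_sig (mk_fun t1 t2 (fun P'' v' => den A d n P'' (upd h x t1 v'))) P' v =
  den A d n P' (upd h x t1 v).
Proof. apply (lam_fun_apply _ D x t1 t2 (den A d n)); intros; apply den_env_continuous. Qed.

End Denotation.

(* [Star] is related to nothing: a program running with enough privileges never
   fails a [check]. *)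
Definition lift_rel {X Y : Type} (r : X -> Y -> Prop) (u : lift X) (v : lift Y) : Prop :=
  (u = Bot /\ v = Bot) \/ exists a b, u = Val a /\ v = Val b /\ r a b.

Lemma lift_rel_impl {X Y} (r r' : X -> Y -> Prop) u v :
  (forall a b, r a b -> r' a b) -> lift_rel r u v -> lift_rel r' u v.
Proof. intros H [[-> ->]|(a&b&->&->&Hr)]; [left | right; exists a, b]; auto. Qed.

Lemma lift_rel_bind {X Y X' Y'} (r : X -> Y -> Prop) (r' : X' -> Y' -> Prop) u v K K' :
  lift_rel r u v -> (forall a b, r a b -> lift_rel r' (K a) (K' b)) ->
  lift_rel r' (bind u K) (bind v K').
Proof. intros [[-> ->]|(a&b&->&->&Hr)] HK; simpl; [left | ]; auto. Qed.

Definition admissible (X Y : poset) (r : X -> Y -> Prop) : Prop :=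
  forall a b al bl, is_chain X a -> is_chain Y b -> is_lub X a al -> is_lub Y b bl ->
    (forall k, r (a k) (b k)) -> r al bl.

Lemma lift_rel_admissible (X Y : poset) (r : X -> Y -> Prop) :
  cpo X -> cpo Y -> admissible X Y r -> admissible (lift_poset X) (lift_poset Y) (lift_rel r).
Proof.
  intros HX HY Hr u v ul vl Hu Hv Hul Hvl Huv.
  destruct (is_lub_lift_inv X u ul HX Hu Hul) as [[HuBot ->]|[[[k Hk] _]|(k0&a&al&Ha&Hua&Hal&->)]].
  - left; split; [reflexivity|].
    apply (is_lub_unique _ (lift_partial_order Y (proj1 HY)) v); [exact Hvl|].
    apply (is_lub_const _ (lift_partial_order Y (proj1 HY))); intros k.
    destruct (Huv k) as [[_ ?]|(x&y&Hx&_)]; [assumption | now rewrite HuBot in Hx].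
  - exfalso; destruct (Huv k) as [[Hx _]|(x&y&Hx&_)]; congruence.
  - destruct (is_lub_lift_inv Y v vl HY Hv Hvl) as [[HvBot _]|[[[k Hk] _]|(k1&b&bl&Hb&Hvb&Hbl&->)]].
    + exfalso; destruct (Huv k0) as [[Hx _]|(x&y&_&Hy&_)];
        [rewrite <- (Nat.add_0_l k0), Hua in Hx | rewrite HvBot in Hy]; discriminate.
    + exfalso; destruct (Huv k) as [[_ Hy]|(x&y&_&Hy&_)]; congruence.
    + right; exists al, bl; do 2 (split; [reflexivity|]).
      apply (Hr (fun j => a (j + k1)) (fun j => b (j + k0))).
      * intros j; apply Ha.
      * intros j; apply Hb.
      * now apply (is_lub_shift _ (proj1 HX)).
      * now apply (is_lub_shift _ (proj1 HY)).
      * intros j; destruct (Huv (j + k1 + k0)) as [[Hx _]|(x&y&Hx&Hy&Hxy)];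
          rewrite Hua in Hx; [discriminate|].
        replace (j + k1 + k0) with (j + k0 + k1) in Hy by lia; rewrite Hvb in Hy.
        now injection Hx as <-; injection Hy as <-.
Qed.

Section LogicalRelation.
Variable Privilege : Type.
Notation dm := (dom Privilege).
Notation sm := (sem Privilege).

(* Left: an expression, right: its erasure, which may be called with any
   privileges.  Mismatched simple types never arise and are related trivially. *)
Fixpoint val_rel (th : aty Privilege) : forall t t' : ty, sm t -> sm t' -> Prop :=
  match th with
  | ABool _ => fun t t' =>
      match t as t0, t' as t0' return sm t0 -> sm t0' -> Prop with
      | Bool, Bool => fun a b => a = b
      | _, _ => fun _ _ => True
      end
  | AArr th1 Pi th2 => fun t t' =>
      match t as t0, t' as t0' return sm t0 -> sm t0' -> Prop with
      | Arr t1 t2, Arr t1' t2' => fun g g' => forall P, subset Pi P -> forall Q a b,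
          val_rel th1 t1 t1' a b -> lift_rel (val_rel th2 t2 t2') (proj1_sig g P a) (proj1_sig g' Q b)
      | _, _ => fun _ _ => True
      end
  end.

Lemma val_rel_subty th th' : subty th th' -> forall t t' a b, val_rel th t t' a b -> val_rel th' t t' a b.
Proof.
  induction 1 as [|th1 th1' th2 th2' Pi1 Pi2 _ IH1 _ IH2 HPi]; intros t t' a b Hab; auto.
  destruct t, t'; simpl in *; auto.
  intros P HP Q x y Hxy; apply (lift_rel_impl _ _ _ _ (IH2 _ _)).
  apply Hab; [intros z Hz; apply HP, HPi, Hz | now apply IH1].
Qed.

Lemma val_rel_bot_fun th t1 t2 t1' t2' :
  val_rel th (Arr t1 t2) (Arr t1' t2') (bot_fun Privilege t1 t2) (bot_fun Privilege t1' t2').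
Proof. destruct th; simpl; [exact I | intros; left; split; reflexivity]. Qed.

Lemma val_rel_admissible th : forall t t', admissible (dm t) (dm t') (val_rel th t t').
Proof.
  induction th as [|th1 _ Pi th2 IH2]; intros t t' c c' l l' Hc Hc' Hl Hl' H;
    destruct t as [|t1 t2], t' as [|t1' t2']; simpl; auto.
  - rewrite <- (bool_lub_const c l Hc Hl 0), <- (bool_lub_const c' l' Hc' Hl' 0); apply H.
  - intros P HP Q a b Hab.
    apply (lift_rel_admissible _ _ _ (dom_cpo Privilege t2) (dom_cpo Privilege t2') (IH2 t2 t2')
             (fun k => proj1_sig (c k) P a) (fun k => proj1_sig (c' k) Q b)).
    + intros k; apply Hc.
    + intros k; apply Hc'.
    + apply (is_lub_fun_pointwise _ (dm t1) (dm t2)); auto using dom_cpo.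
    + apply (is_lub_fun_pointwise _ (dm t1') (dm t2')); auto using dom_cpo.
    + intros k; apply H; assumption.
Qed.

Definition opt_val_rel (o : option (aty Privilege)) (o1 o2 : option ty) :
  sem_opt Privilege o1 -> sem_opt Privilege o2 -> Prop :=
  match o, o1 as p1, o2 as p2 return sem_opt Privilege p1 -> sem_opt Privilege p2 -> Prop with
  | Some th, Some t, Some t' => val_rel th t t'
  | _, _, _ => fun _ _ => True
  end.

Definition env_rel (G : actx Privilege) D D' (h : env Privilege D) (h' : env Privilege D') : Prop :=
  forall y, opt_val_rel (G y) (D y) (D' y) (h y) (h' y).

Lemma env_rel_upd G D D' h h' x th t t' v v' :
  env_rel G D D' h h' -> val_rel th t t' v v' ->
  env_rel (aext G x th) (ext D x t) (ext D' x t') (upd h x t v) (upd h' x t' v').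
Proof. intros Hh Hv y; unfold aext, ext, upd; destruct (Nat.eqb y x); simpl; auto. Qed.

Lemma env_rel_lookup G D D' h h' x th t t' (Hx : D x = Some t) (Hx' : D' x = Some t') :
  env_rel G D D' h h' -> G x = Some th -> val_rel th t t' (lookup h x Hx) (lookup h' x Hx').
Proof.
  intros Hh HG; specialize (Hh x); rewrite HG in Hh; revert Hh; unfold lookup.
  generalize (h x) (h' x); rewrite Hx, Hx'; auto.
Qed.

Lemma val_rel_lfp th D D' f t1 t2 t1' t2' Ph Ph' h h' :
  env_continuous Privilege (ext D f (Arr t1 t2)) (dm (Arr t1 t2)) Ph ->
  env_continuous Privilege (ext D' f (Arr t1' t2')) (dm (Arr t1' t2')) Ph' ->
  (forall g g', val_rel th _ _ g g' ->
     val_rel th _ _ (Ph (upd h f (Arr t1 t2) g)) (Ph' (upd h' f (Arr t1' t2') g'))) ->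
  val_rel th (Arr t1 t2) (Arr t1' t2')
    (lfp (fun g => Ph (upd h f _ g))) (lfp (fun g => Ph' (upd h' f _ g))).
Proof.
  intros HPh HPh' Hstep.
  apply (val_rel_admissible th _ _ (kleene_iter Privilege D f t1 t2 Ph h)
           (kleene_iter Privilege D' f t1' t2' Ph' h'));
    auto using kleene_iter_chain, lfp_is_lub_kleene_iter.
  intros j; induction j as [|j IH]; [apply val_rel_bot_fun | now apply Hstep].
Qed.

End LogicalRelation.

Lemma mem_true {X} (P : PrivSet X) p : P p -> mem P p = true.
Proof. intros H; unfold mem; destruct excluded_middle_informative; [reflexivity | contradiction]. Qed.

Lemma subset_union_l {X} (Pi1 Pi2 P : PrivSet X) : subset (union Pi1 Pi2) P -> subset Pi1 P.
Proof. intros H p Hp; apply H; left; exact Hp. Qed.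

Lemma subset_union_r {X} (Pi1 Pi2 P : PrivSet X) : subset (union Pi1 Pi2) P -> subset Pi2 P.
Proof. intros H p Hp; apply H; right; exact Hp. Qed.

Lemma subset_inter {X} (Pi P P' : PrivSet X) : subset Pi P -> subset Pi P' -> subset Pi (inter P P').
Proof. intros H H' p Hp; split; auto. Qed.

Lemma subset_join {Principal Privilege} (A : Principal -> PrivSet Privilege) n p Pi P :
  subset Pi P -> subset (join A n Pi p) (join A n P p).
Proof. unfold join; destruct (mem (A n) p); [intros H q [Hq|Hq]; [left|right] |]; auto. Qed.

Section Fundamental.
Variables Principal Privilege : Type.
Variable A : Principal -> PrivSet Privilege.

(* The erased side runs with an arbitrary principal and privilege set: erasure
   removes every construct that consults them except [signs], which resets both. *)
Lemma den_erase_rel G n e th Pi :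
  sa A G n e th Pi -> test_free e ->
  forall D D' t t' (d : typing Principal Privilege D e t) (d' : typing Principal Privilege D' (erase e) t')
    h h' P n' Q,
  subset Pi P -> env_rel Privilege G D D' h h' ->
  lift_rel (val_rel Privilege th t t') (den A d n P h) (den A d' n' Q h').
Proof.
  induction 1; simpl; intros Htf D D' t t' d d' h h' P0 n0 Q HP Hh.
  - dependent destruction d; dependent destruction d'; simpl; right; eauto.
  - dependent destruction d; dependent destruction d'; simpl; right.
    do 2 eexists; do 2 (split; [reflexivity|]); now apply env_rel_lookup with G.
  - dependent destruction d; dependent destruction d'; simpl; right.
    do 2 eexists; do 2 (split; [reflexivity|]); simpl.
    intros P' HP' Q' a b Hab; rewrite !mk_fun_den_apply.
    apply IHsa; auto; now apply env_rel_upd.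
  - destruct Htf as [Htf1 Htf2]; dependent destruction d; dependent destruction d'; simpl.
    apply (lift_rel_bind (val_rel Privilege (AArr th1 Pi th2) _ _));
      [apply IHsa1; eauto using subset_union_l, subset_union_r|].
    intros g g' Hg; apply (lift_rel_bind (val_rel Privilege th1' _ _));
      [apply IHsa2; eauto using subset_union_l, subset_union_r|].
    intros a b Hab; apply Hg; [exact (subset_union_l _ _ _ HP) | now apply val_rel_subty with th1'].
  - destruct Htf as [Htf [Htf1 Htf2]]; dependent destruction d; dependent destruction d'; simpl.
    apply (lift_rel_bind (val_rel Privilege (ABool _) Bool Bool));
      [apply IHsa1; eauto using subset_union_l, subset_union_r|].
    intros [] b <-; [apply IHsa2 | apply IHsa3]; eauto using subset_union_l, subset_union_r.
  - destruct Htf as [Htf1 Htf2]; dependent destruction d; dependent destruction d'; simpl.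
    apply IHsa2; eauto using subset_union_r.
    apply env_rel_upd; [exact Hh|].
    apply (val_rel_lfp _ _ _ _ _ _ _ _ _ (lam_fun _ _ x t1 t2 (den A d1 n))
             (lam_fun _ _ x t0 t3 (den A d'1 n0)));
      [apply env_continuous_lam_fun; intros; apply den_env_continuous ..|].
    intros g g' Hg P' HP' Q' a b Hab; unfold lam_fun; rewrite !mk_fun_den_apply.
    apply IHsa1; auto; apply env_rel_upd; [apply env_rel_upd|]; assumption.
  - dependent destruction d; simpl; rewrite mem_true; [|apply HP; right; reflexivity].
    apply IHsa; eauto using subset_union_l.
  - dependent destruction d; simpl; apply IHsa; auto using subset_join.
  - dependent destruction d; dependent destruction d'; simpl.
    apply IHsa; auto using subset_inter.
  - contradiction.
Qed.

End Fundamental.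

Theorem theorem4 (Principal Privilege : Type) (A : Principal -> PrivSet Privilege)
  (n : Principal) (e : expr Principal Privilege) (Pi : PrivSet Privilege) :
  test_free e ->
  sa A (actx0 Privilege) n e (ABool Privilege) Pi ->
  forall (P : PrivSet Privilege), subset Pi P ->
  forall (d1 : typing Principal Privilege ctx0 e Bool) (d2 : typing Principal Privilege ctx0 (erase e) Bool),
    den A d1 n P (env0 Privilege) = den A d2 n P (env0 Privilege).
Proof.
  intros Htf Hsa P HP d1 d2.
  assert (Henv : env_rel Privilege (actx0 Privilege) ctx0 ctx0 (env0 Privilege) (env0 Privilege))
    by (intros y; exact I).
  destruct (den_erase_rel _ _ A _ _ _ _ _ Hsa Htf _ _ _ _ d1 d2 _ _ P n P HP Henv)
    as [[-> ->]|(a&b&->&->&Hab)]; [reflexivity|].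
  simpl in Hab; now subst.
Qed.
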